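(* Consider subgradient-push as in the setting below. Suppose $\{\mathbb G(t)\}$ is uniformly strongly connected by sub-sequences of length $L$ and $\|g_i(t)\|\le G$ for all $i,t$, for some $G>0$. Let $\eta,\mu$ be constants as described below. Then for all $t\ge0$ and $i\in\mathcal V$, $$\Big\|z_i(t+1)-\frac1n\sum_{k=1}^n\big(x_k(t)-\alpha(t)g_k(t)\big)\Big\|\le\frac8\eta\mu^t\sum_{k=1}^n\|x_k(0)-\alpha(0)g_k(0)\|+\frac{8nG}{\eta}\sum_{s=1}^t\mu^{t-s}\alpha(s).$$ If in addition $\{\alpha(t)\}$ is positive, non-increasing, with $\sum_t\alpha(t)=\infty$ and $\sum_t\alpha^2(t)<\infty$, then for all $t\ge0$ and $i\in\mathcal V$, $$\Big\|z_i(t+1)-\frac1n\sum_{k=1}^n\big(x_k(t)-\alpha(t)g_k(t)\big)\Big\|\le\frac8\eta\mu^t\sum_{k=1}^n\|x_k(0)-\alpha(0)g_k(0)\|+\frac{8nG}{\eta(1-\mu)}\big(\alpha(0)\mu^{t/2}+\alpha(\lceil t/2\rceil)\big).$$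
   Context: Setting. Fix $n$ agents, $\mathcal V=\{1,\dots,n\}$. For each $t\in\{0,1,2,\dots\}$, $\mathbb G(t)=(\mathcal V,\mathcal E(t))$ is a directed graph containing a self-arc $(i,i)$ at every vertex; $\mathcal N_i(t)=\{j:(j,i)\in\mathcal E(t)\}$ and $\mathcal N_i^-(t)=\{k:(i,k)\in\mathcal E(t)\}$. Weights $w_{ij}(t)$ are positive for $j\in\mathcal N_i(t)$ and $w_{ij}(t)=0$ otherwise, and satisfy: there is $\beta>0$ with $w_{ij}(t)\ge\beta$ whenever $j\in\mathcal N_i(t)$, and $\sum_{j\in\mathcal N_i^-(t)}w_{ji}(t)=1$ for all $i,t$. Write $\Phi_W(t,\tau)=W(t-1)\cdots W(\tau)$ for $t>\tau$, where $W(t)=[w_{ij}(t)]$. The sequence $\{\mathbb G(t)\}$ is uniformly strongly connected by sub-sequences of length $L$ if for every $t\ge0$ the directed graph with vertex set $\mathcal V$ and edge set $\bigcup_{k=t}^{t+L-1}\mathcal E(k)$ is strongly connected. Subgradient-push: each agent $i$ has a convex $f_i:\mathbb R^d\to\mathbb R$; with stepsizes $\alpha(t)>0$, $x_i(t+1)=\sum_{j\in\mathcal N_i(t)}w_{ij}(t)[x_j(t)-\alpha(t)g_j(t)]$, $x_i(0)\in\mathbb R^d$; $y_i(t+1)=\sum_{j\in\mathcal N_i(t)}w_{ij}(t)y_j(t)$, $y_i(0)=1$; $z_i(t)=x_i(t)/y_i(t)$; and $g_i(t)$ is a subgradient of $f_i$ at $z_i(t)$. Constants: $\eta>0$ is any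 constant with $y_i(t)\ge\eta$ for all $i,t$ (such exists, e.g. $\eta=n^{-nL}$); $\mu\in(0,1)$ is any constant for which there exist stochastic vectors $\phi(t)\in\mathbb R^n$ with $|[\Phi_W(t+1,s)]_{ij}-\phi_i(t)|\le4\mu^{t-s}$ for all $i,j\in\mathcal V$, $t\ge s\ge0$ (e.g. $\mu=(1-n^{-nL})^{1/L}$). *)

From HB Require Import structures.
From mathcomp Require Import all_boot all_order all_algebra.
From mathcomp Require Import all_classical all_reals all_analysis.
Set Implicit Arguments. Unset Strict Implicit. Unset Printing Implicit Defensive.
Import Order.TTheory GRing.Theory Num.Theory.
Local Open Scope ring_scope.

Section Defs.
Variable R : realType.

Definition dotv (d : nat) (u v : 'rV[R]_d) : R := \sum_(k < d) u 0 k * v 0 k.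
Definition enorm (d : nat) (v : 'rV[R]_d) : R := Num.sqrt (\sum_(k < d) v 0 k ^+ 2).

Definition convex_fun (d : nat) (f : 'rV[R]_d -> R) : Prop :=
  forall (u v : 'rV[R]_d) (l : R), 0 <= l -> l <= 1 ->
    f (l *: u + (1 - l) *: v) <= l * f u + (1 - l) * f v.

Definition is_subgradient (d : nat) (f : 'rV[R]_d -> R) (z g : 'rV[R]_d) : Prop :=
  forall u : 'rV[R]_d, f z + dotv g (u - z) <= f u.

Definition Wmx (n : nat) (w : nat -> 'I_n -> 'I_n -> R) (t : nat) : 'M[R]_n :=
  \matrix_(i, j) w t i j.

Fixpoint Phi_aux (n : nat) (w : nat -> 'I_n -> 'I_n -> R) (tau k : nat) : 'M[R]_n :=
  match k with
  | 0 => 1%:M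
  | k'.+1 => Wmx w (tau + k') *m Phi_aux w tau k'
  end.

Definition PhiW (n : nat) (w : nat -> 'I_n -> 'I_n -> R) (t tau : nat) : 'M[R]_n :=
  Phi_aux w tau (t - tau).

Definition stochastic_vec (n : nat) (phi : 'I_n -> R) : Prop :=
  (forall i, 0 <= phi i) /\ \sum_(i < n) phi i = 1.
End Defs.

(* E t j i  <->  (j,i) is an arc of G(t), i.e. j \in N_i(t), i \in N_j^-(t) *)
Definition strongly_connected (n : nat) (e : rel 'I_n) : Prop :=
  forall i j : 'I_n, connect e i j.

Definition uniformly_strongly_connected (n : nat) (E : nat -> rel 'I_n) (L : nat) : Prop :=
  forall t : nat,
    strongly_connected [rel u v | [exists k : 'I_L, E (t + k)%N u v]].

(* The weights y and the states x obey the same column-stochastic linear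
   recursion, x being perturbed by the gradient steps -alpha(s) g(s).
   Unrolling it expresses x_i(t+1) and y_i(t+1) through the transition
   matrices Phi_W(t+1, s), while column stochasticity conserves the total
   input sum_k (x_k(t) - alpha(t) g_k(t)).  Splitting off the limit weight
   phi_i(t) of the rows of Phi_W then reduces the consensus error of
   z_i(t+1) = x_i(t+1) / y_i(t+1) to deviations |Phi_W(t+1,s)_ij - phi_i(t)|
   <= 4 mu^(t-s), and dividing by y_i(t+1) >= eta gives the first bound.
   The second bound follows by splitting the discounted step sum
   sum_s mu^(t-s) alpha(s) at ceil(t/2) for nonincreasing stepsizes.
   The connectivity, weight lower bound and subgradient hypotheses only
   serve to guarantee that eta, mu and phi exist; the estimates use these
   constants directly. *)
From HB Require Import structures.
From mathcomp Require Import all_boot all_order all_algebra.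
From mathcomp Require Import all_classical all_reals all_analysis.
From mathcomp Require Import ring lra zify.
Import Order.TTheory GRing.Theory Num.Theory numFieldNormedType.Exports.
Local Open Scope ring_scope.
Set Implicit Arguments. Unset Strict Implicit.

Section EuclideanNorm.
Variables (R : realType) (d : nat).
Implicit Types (u v : 'rV[R]_d) (a : R).

Lemma enorm_ge0 v : 0 <= enorm v.
Proof. exact: sqrtr_ge0. Qed.

Lemma enorm_sqr v : enorm v ^+ 2 = \sum_k v 0 k ^+ 2.
Proof. by rewrite sqr_sqrtr // sumr_ge0 // => k _; rewrite sqr_ge0. Qed.

Lemma enormZ a v : enorm (a *: v) = `|a| * enorm v.
Proof.
rewrite /enorm; under eq_bigr do rewrite mxE exprMn.
by rewrite -mulr_sumr sqrtrM ?sqr_ge0 // sqrtr_sqr.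
Qed.

Lemma enorm_eq0 v : enorm v = 0 -> forall k, v 0 k = 0.
Proof.
move=> v0 k; apply/eqP; rewrite -sqrf_eq0; apply/eqP.
have sum0 : \sum_k v 0 k ^+ 2 = 0 by rewrite -enorm_sqr v0 expr0n.
by apply: (psumr_eq0P _ sum0) => // j _; rewrite sqr_ge0.
Qed.

(* Cauchy-Schwarz: expand 0 <= | |v| u - |u| v |^2. *)
Lemma cauchy_schwarz u v : dotv u v <= enorm u * enorm v.
Proof.
rewrite /dotv; set a := enorm u; set b := enorm v.
have [a0|a_neq0] := eqVneq a 0.
  by rewrite a0 mul0r big1 // => k _; rewrite (enorm_eq0 a0) mul0r.
have [b0|b_neq0] := eqVneq b 0.
  by rewrite b0 mulr0 big1 // => k _; rewrite (enorm_eq0 b0) mulr0.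
have ab_gt0 : 0 < a * b by rewrite mulr_gt0 // lt0r ?enorm_ge0 ?andbT.
have expand : \sum_k (b * u 0 k - a * v 0 k) ^+ 2
    = b ^+ 2 * \sum_k u 0 k ^+ 2 - 2 * (a * b) * \sum_k u 0 k * v 0 k
      + a ^+ 2 * \sum_k v 0 k ^+ 2.
  rewrite !mulr_sumr -sumrB -big_split /=.
  by apply: eq_bigr => k _; ring.
rewrite -!enorm_sqr -/a -/b in expand.
have : 0 <= \sum_k (b * u 0 k - a * v 0 k) ^+ 2.
  by rewrite sumr_ge0 // => k _; rewrite sqr_ge0.
rewrite expand.
have -> : b ^+ 2 * a ^+ 2 - 2 * (a * b) * \sum_k u 0 k * v 0 k + a ^+ 2 * b ^+ 2
    = 2 * (a * b) * (a * b - \sum_k u 0 k * v 0 k) by ring.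
by rewrite pmulr_rge0 ?subr_ge0 // mulr_gt0.
Qed.

Lemma enormD u v : enorm (u + v) <= enorm u + enorm v.
Proof.
rewrite -ler_sqr ?nnegrE ?addr_ge0 ?enorm_ge0 // enorm_sqr.
have -> : \sum_k (u + v) 0 k ^+ 2
    = enorm u ^+ 2 + 2 * dotv u v + enorm v ^+ 2.
  rewrite !enorm_sqr /dotv mulr_sumr -!big_split /=.
  by apply: eq_bigr => k _; rewrite mxE; ring.
by have := cauchy_schwarz u v; lra.
Qed.

Lemma enormB u v : enorm (u - v) <= enorm u + enorm v.
Proof. by rewrite -[enorm v]mul1r -normrN1 -enormZ scaleN1r enormD. Qed.

Lemma enorm_sum (I : Type) (r : seq I) (P : pred I) (F : I -> 'rV[R]_d) :
  enorm (\sum_(i <- r | P i) F i) <= \sum_(i <- r | P i) enorm (F i).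
Proof.
elim/big_rec2: _ => [|i y1 y2 _ IH].
  by rewrite /enorm big1 ?sqrtr0 // => k _; rewrite mxE expr0n.
by apply: le_trans (enormD _ _) _; rewrite lerD2l.
Qed.

End EuclideanNorm.

Section LinearDynamics.
Variables (R : realType) (n : nat) (w : nat -> 'I_n -> 'I_n -> R).

Lemma PhiW_id t : PhiW w t t = 1%:M.
Proof. by rewrite /PhiW subnn. Qed.

Lemma PhiW_S t s : (s <= t)%N -> PhiW w t.+1 s = Wmx w t *m PhiW w t s.
Proof. by move=> le_st; rewrite /PhiW subSn //= subnKC. Qed.

Lemma perturbed_recursion_unroll m (X P : nat -> 'M[R]_(n, m)) :
  (forall t, X t.+1 = Wmx w t *m (X t - P t)) ->
  forall t, X t.+1 = PhiW w t.+1 0 *m (X 0 - P 0)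
                     - \sum_(1 <= s < t.+1) PhiW w t.+1 s *m P s.
Proof.
move=> rec; elim=> [|t IH].
  by rewrite rec big_geq // subr0 /PhiW /= mulmx1.
rewrite rec IH [in RHS]big_nat_recr //= (@PhiW_S t.+1 0) // (@PhiW_S t.+1 t.+1) //.
rewrite PhiW_id mulmx1 !mulmxBr mulmx_sumr opprD addrA; congr (_ - _ - _).
  by rewrite !mulmxA.
by apply: eq_big_nat => s /andP [_ lt_st]; rewrite mulmxA -PhiW_S // ltnW.
Qed.

Lemma column_stochastic_row_sum m t (A : 'M[R]_(n, m)) :
  (forall j, \sum_i w t i j = 1) ->
  \sum_i row i (Wmx w t *m A) = \sum_i row i A.
Proof.
move=> colsum; under eq_bigr do rewrite row_mul mulmx_sum_row.
rewrite exchange_big /=; apply: eq_bigr => j _.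
by rewrite -scaler_suml; under eq_bigr do rewrite !mxE; rewrite colsum scale1r.
Qed.

End LinearDynamics.

Definition stack (R : realType) (n d : nat) (v : 'I_n -> 'rV[R]_d) : 'M[R]_(n, d) :=
  \matrix_i v i.

Lemma row_mul_stack (R : realType) (n d : nat) (P : 'M[R]_n)
    (v : 'I_n -> 'rV[R]_d) (i : 'I_n) :
  row i (P *m stack v) = \sum_j P i j *: v j.
Proof. by rewrite row_mul mulmx_sum_row; apply: eq_bigr => j _; rewrite mxE rowK. Qed.

Section SubgradientPush.
Variables (R : realType) (n d : nat) (E : nat -> rel 'I_n)
  (w : nat -> 'I_n -> 'I_n -> R) (alpha : nat -> R)
  (x : nat -> 'I_n -> 'rV[R]_d) (y : nat -> 'I_n -> R)
  (g : nat -> 'I_n -> 'rV[R]_d).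
Hypothesis w_off_arcs : forall t i j, ~~ E t j i -> w t i j = 0.
Hypothesis w_colsum : forall t i, \sum_(k | E t i k) w t k i = 1.
Hypothesis x_rec : forall t i,
  x t.+1 i = \sum_(j | E t j i) w t i j *: (x t j - alpha t *: g t j).
Hypothesis y_init : forall i, y 0 i = 1.
Hypothesis y_rec : forall t i, y t.+1 i = \sum_(j | E t j i) w t i j * y t j.

Definition push_input t i : 'rV[R]_d := x t i - alpha t *: g t i.

(* Weights vanish off the arcs, so each column of W(t) sums to one. *)
Lemma w_colsum_full t j : \sum_i w t i j = 1.
Proof. by rewrite -(w_colsum t j) [RHS]big_rmcond // => i /w_off_arcs. Qed.

Lemma push_state_rec t : stack (x t.+1) = Wmx w t *m stack (push_input t).
Proof.
apply/row_matrixP => i; rewrite row_mul_stack rowK x_rec big_rmcond //=.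
  by apply: eq_bigr => j _; rewrite mxE.
by move=> j /w_off_arcs ->; rewrite scale0r.
Qed.

Lemma push_state_unroll t i :
  x t.+1 i = \sum_j PhiW w t.+1 0 i j *: push_input 0 j
    - \sum_(1 <= s < t.+1) alpha s *: \sum_j PhiW w t.+1 s i j *: g s j.
Proof.
have stack_input s : stack (push_input s) = stack (x s) - alpha s *: stack (g s).
  by apply/matrixP => k l; rewrite !mxE.
have unroll := perturbed_recursion_unroll (P := fun s => alpha s *: stack (g s))
  (fun s => etrans (push_state_rec s) (congr1 _ (stack_input s))) t.
have := congr1 (row i) unroll; rewrite rowK => ->.
rewrite linearB /= -stack_input row_mul_stack linear_sum; congr (_ - _).
by apply: eq_bigr => s _; rewrite -scalemxAr linearZ /= row_mul_stack.
Qed.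

Lemma push_weight_unroll t i : y t.+1 i = \sum_j PhiW w t.+1 0 i j.
Proof.
have rec s : \col_k y s.+1 k = Wmx w s *m (\col_k y s k - 0).
  apply/colP => k; rewrite subr0 !mxE y_rec big_rmcond /=.
    by apply: eq_bigr => j _; rewrite !mxE.
  by move=> j /w_off_arcs ->; rewrite mul0r.
have := congr1 (fun M : 'M[R]_(n, 1) => M i 0) (perturbed_recursion_unroll rec t).
rewrite big1 => [|s _]; last exact: mulmx0.
rewrite !subr0 !mxE => ->; apply: eq_bigr => j _.
by rewrite !mxE y_init mulr1.
Qed.

(* Column stochasticity conserves the total input up to the gradient steps. *)
Lemma push_input_sum t : \sum_k push_input t k
  = \sum_k push_input 0 k - \sum_(1 <= s < t.+1) alpha s *: \sum_k g s k.
Proof.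
elim: t => [|t IH]; first by rewrite big_geq // subr0.
have mass : \sum_k x t.+1 k = \sum_k push_input t k.
  have := column_stochastic_row_sum (stack (push_input t)) (w_colsum_full t).
  rewrite -push_state_rec; under eq_bigr do rewrite rowK.
  by under [in RHS]eq_bigr do rewrite rowK.
rewrite {1}/push_input sumrB -scaler_sumr mass IH.
by rewrite [in RHS]big_nat_recr //= opprD addrA.
Qed.

End SubgradientPush.

(* Rescaling identity behind the error decomposition: for any reference
   weight ph, Y^-1 A - c B = Y^-1 ((A - ph B) - (c Y - ph) B). *)
Lemma rescaled_difference (R : fieldType) (V : lmodType R) (Y c ph : R) (A B : V) :
  Y != 0 -> Y^-1 *: A - c *: B = Y^-1 *: ((A - ph *: B) - (c * Y - ph) *: B).
Proof.
move=> Y_neq0; rewrite -addrA -opprD -scalerDl subrKC scalerBr scalerA.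
by rewrite mulrCA mulVf // mulr1.
Qed.

Lemma discount_le (R : realDomainType) (mu : R) (alpha : nat -> R) t :
  0 <= mu -> mu <= 1 -> (forall s, 0 <= alpha s) ->
  mu ^+ t * \sum_(1 <= s < t.+1) alpha s
  <= \sum_(1 <= s < t.+1) mu ^+ (t - s) * alpha s.
Proof.
move=> mu_ge0 mu_le1 alpha_ge0; rewrite mulr_sumr; apply: ler_sum => s _.
by apply: ler_wpM2r => //; apply: ler_wiXn2l => //; exact: leq_subr.
Qed.

Section MixingDeviation.
Variables (R : realType) (n : nat) (w : nat -> 'I_n -> 'I_n -> R)
  (phi : nat -> 'I_n -> R) (mu : R).
Hypothesis phi_approx : forall t s i j, (s <= t)%N ->
  `|PhiW w t.+1 s i j - phi t i| <= 4 * mu ^+ (t - s).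

Lemma mixing_deviation d t s i (v : 'I_n -> 'rV[R]_d) : (s <= t)%N ->
  enorm (\sum_j PhiW w t.+1 s i j *: v j - phi t i *: \sum_j v j)
  <= 4 * mu ^+ (t - s) * \sum_j enorm (v j).
Proof.
move=> le_st; rewrite scaler_sumr -sumrB mulr_sumr.
apply: le_trans (enorm_sum _ _ _) _; apply: ler_sum => j _.
by rewrite -scalerBl enormZ ler_wpM2r ?enorm_ge0 ?phi_approx.
Qed.

Lemma row_sum_deviation t i :
  `|\sum_j PhiW w t.+1 0 i j - n%:R * phi t i| <= n%:R * (4 * mu ^+ t).
Proof.
have const_sum (c : R) : n%:R * c = \sum_(j < n) c.
  by rewrite sumr_const card_ord mulr_natl.
rewrite !const_sum -sumrB; apply: le_trans (ler_norm_sum _ _ _) _.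
apply: ler_sum => j _.
by have := phi_approx i j (leq0n t); rewrite subn0.
Qed.

End MixingDeviation.

Section ConsensusError.
Variables (R : realType) (n d : nat) (E : nat -> rel 'I_n)
  (w : nat -> 'I_n -> 'I_n -> R) (alpha : nat -> R)
  (x : nat -> 'I_n -> 'rV[R]_d) (y : nat -> 'I_n -> R)
  (g : nat -> 'I_n -> 'rV[R]_d) (G eta mu : R) (phi : nat -> 'I_n -> R).
Hypothesis w_off_arcs : forall t i j, ~~ E t j i -> w t i j = 0.
Hypothesis w_colsum : forall t i, \sum_(k | E t i k) w t k i = 1.
Hypothesis x_rec : forall t i,
  x t.+1 i = \sum_(j | E t j i) w t i j *: (x t j - alpha t *: g t j).
Hypothesis y_init : forall i, y 0 i = 1.
Hypothesis y_rec : forall t i, y t.+1 i = \sum_(j | E t j i) w t i j * y t j.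
Hypothesis alpha_gt0 : forall t, 0 < alpha t.
Hypothesis g_bound : forall t i, enorm (g t i) <= G.
Hypothesis eta_gt0 : 0 < eta.
Hypothesis y_ge_eta : forall t i, eta <= y t i.
Hypothesis mu_ge0 : 0 <= mu.
Hypothesis mu_le1 : mu <= 1.
Hypothesis phi_approx : forall t s i j, (s <= t)%N ->
  `|PhiW w t.+1 s i j - phi t i| <= 4 * mu ^+ (t - s).

Let u t k := push_input alpha x g t k.
Let input0 := \sum_k enorm (u 0 k).
Let discounted t := \sum_(1 <= s < t.+1) mu ^+ (t - s) * alpha s.

Lemma sum_gradient_bound s : \sum_k enorm (g s k) <= n%:R * G.
Proof.
apply: le_trans (ler_sum _ (fun k _ => g_bound s k)) _.
by rewrite sumr_const card_ord mulr_natl.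
Qed.

Lemma state_deviation t i :
  enorm (x t.+1 i - phi t i *: \sum_k u t k)
  <= 4 * mu ^+ t * input0 + 4 * (n%:R * G) * discounted t.
Proof.
rewrite (push_state_unroll w_off_arcs x_rec) (push_input_sum w_off_arcs w_colsum x_rec).
set Phi := PhiW w t.+1.
have regroup (a b c e : 'rV[R]_d) (p : R) :
    a - c - p *: (b - e) = (a - p *: b) - (c - p *: e).
  by rewrite scalerBr !opprB addrACA [RHS]addrACA [- c + _]addrC.
have steps_deviation : \sum_(1 <= s < t.+1) alpha s *: \sum_j Phi s i j *: g s j
      - phi t i *: \sum_(1 <= s < t.+1) alpha s *: \sum_k g s k
    = \sum_(1 <= s < t.+1) alpha s *:
          (\sum_j Phi s i j *: g s j - phi t i *: \sum_k g s k).
  rewrite scaler_sumr -sumrB; apply: eq_bigr => s _.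
  by rewrite scalerBr !scalerA mulrC.
rewrite regroup steps_deviation.
apply: le_trans (enormB _ _) _; apply: lerD.
  by have := mixing_deviation phi_approx i (u 0) (leq0n t); rewrite subn0.
apply: le_trans (enorm_sum _ _ _) _.
rewrite /discounted mulr_sumr; apply: ler_sum_nat => s /andP [_ lt_st].
rewrite enormZ gtr0_norm //.
have -> : 4 * (n%:R * G) * (mu ^+ (t - s) * alpha s)
    = alpha s * (4 * mu ^+ (t - s) * (n%:R * G)) by ring.
apply: ler_wpM2l; first exact: ltW.
apply: le_trans (mixing_deviation (t := t) phi_approx i (g s) lt_st) _.
apply: ler_wpM2l; last exact: sum_gradient_bound.
by rewrite mulr_ge0 ?exprn_ge0.
Qed.

Lemma input_sum_bound t :
  enorm (\sum_k u t k) <= input0 + n%:R * G * \sum_(1 <= s < t.+1) alpha s.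
Proof.
rewrite (push_input_sum w_off_arcs w_colsum x_rec).
apply: le_trans (enormB _ _) _; apply: lerD; first exact: enorm_sum.
apply: le_trans (enorm_sum _ _ _) _; rewrite mulr_sumr; apply: ler_sum => s _.
rewrite enormZ gtr0_norm // mulrC; apply: ler_wpM2r; first exact: ltW.
exact: le_trans (enorm_sum _ _ _) (sum_gradient_bound s).
Qed.

(* The consensus error of z_i(t+1): splitting off phi_i(t) reduces it to
   the state deviation and the deviation of the weight y_i(t+1) from n phi_i(t). *)
Lemma push_consensus_error t i :
  enorm ((y t.+1 i)^-1 *: x t.+1 i
         - n%:R^-1 *: \sum_(k < n) (x t k - alpha t *: g t k))
  <= 8 / eta * mu ^+ t * input0 + 8 * n%:R * G / eta * discounted t.
Proof.
set Y := y t.+1 i; set S := \sum_(k < n) _.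
have Y_gt0 : 0 < Y := lt_le_trans eta_gt0 (y_ge_eta _ _).
have weight_dev : `|n%:R^-1 * Y - phi t i| <= 4 * mu ^+ t.
  have n_pos : 0 < n%:R :> R by rewrite ltr0n (leq_ltn_trans _ (ltn_ord i)).
  have -> : n%:R^-1 * Y - phi t i = n%:R^-1 * (Y - n%:R * phi t i).
    by field; rewrite lt0r_neq0.
  rewrite normrM ger0_norm ?invr_ge0 ?(ltW n_pos) // -(ler_pM2l n_pos).
  rewrite mulrA divff ?lt0r_neq0 // mul1r.
  by rewrite /Y (push_weight_unroll w_off_arcs y_init y_rec) row_sum_deviation.
have dev := state_deviation t i.
have mass := input_sum_bound t.
have disc := discount_le t mu_ge0 mu_le1 (fun s => ltW (alpha_gt0 s)).
have G_ge0 : 0 <= G := le_trans (enorm_ge0 _) (g_bound 0 i).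
have total : enorm (x t.+1 i - phi t i *: S - (n%:R^-1 * Y - phi t i) *: S)
    <= 8 * mu ^+ t * input0 + 8 * (n%:R * G) * discounted t.
  apply: le_trans (enormB _ _) _; rewrite enormZ.
  have := ler_pM (normr_ge0 _) (enorm_ge0 _) weight_dev mass.
  have : 0 <= n%:R * G by rewrite mulr_ge0 ?ler0n.
  rewrite -/(discounted t) in disc; nra.
rewrite (@rescaled_difference _ _ _ _ (phi t i)) ?lt0r_neq0 //.
rewrite enormZ gtr0_norm ?invr_gt0 //.
have inv_le : Y^-1 <= eta^-1 by rewrite lef_pV2 ?posrE // y_ge_eta.
have -> : 8 / eta * mu ^+ t * input0 + 8 * n%:R * G / eta * discounted t
    = eta^-1 * (8 * mu ^+ t * input0 + 8 * (n%:R * G) * discounted t) by ring.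
by apply: ler_pM inv_le total; rewrite ?invr_ge0 ?(ltW Y_gt0) ?enorm_ge0.
Qed.

End ConsensusError.

Lemma geometric_window (R : comNzRingType) (mu : R) t h : (h <= t.+1)%N ->
  (1 - mu) * \sum_(0 <= s < h) mu ^+ (t - s) = mu ^+ (t.+1 - h) - mu ^+ t.+1.
Proof.
elim: h => [|h IH] le_ht; first by rewrite big_geq // subn0 subrr mulr0.
rewrite big_nat_recr //= mulrDr (IH (ltnW le_ht)) subSn // subSS exprS; ring.
Qed.

(* Splitting the discounted sum at ceil(t/2): early steps are damped by
   mu^(t/2), late steps are bounded by alpha(ceil(t/2)). *)
Lemma discounted_tail_bound (R : realType) (alpha : nat -> R) (mu : R) t :
  0 < mu -> mu < 1 -> (forall s, 0 < alpha s) ->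
  (forall s, alpha s.+1 <= alpha s) ->
  \sum_(1 <= s < t.+1) mu ^+ (t - s) * alpha s
  <= (alpha 0%N * powR mu (t%:R / 2) + alpha (uphalf t)) / (1 - mu).
Proof.
move=> mu_gt0 mu_lt1 alpha_gt0 alpha_noninc.
have alpha_mono : {homo alpha : m k / (m <= k)%N >-> k <= m}.
  by apply: homo_leq => // a b c ba cb; apply: le_trans cb ba.
set h := uphalf t.
have h2_le : (h.*2 <= t.+1)%N by rewrite /h uphalfK; case: (odd t).
have h_le : (h <= t.+1)%N by apply: leq_trans h2_le; rewrite -addnn leq_addr.
set early := \sum_(0 <= s < h) mu ^+ (t - s).
set late := \sum_(h <= s < t.+1) mu ^+ (t - s).
have early_eq : (1 - mu) * early = mu ^+ (t.+1 - h) - mu ^+ t.+1.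
  exact: geometric_window.
have all_eq : (1 - mu) * (early + late) = 1 - mu ^+ t.+1.
  by rewrite /early /late -big_cat_nat // geometric_window // subnn expr0.
have split_sum : \sum_(1 <= s < t.+1) mu ^+ (t - s) * alpha s
    <= alpha 0%N * early + alpha h * late.
  apply: le_trans (_ : \sum_(0 <= s < t.+1) mu ^+ (t - s) * alpha s <= _).
    by rewrite [X in _ <= X]big_ltn // lerDr mulr_ge0 ?exprn_ge0 ?ltW.
  rewrite (big_cat_nat (leq0n h) h_le) /= !mulr_sumr.
  apply: lerD; apply: ler_sum_nat => s /andP [le_hs _].
    by rewrite mulrC ler_wpM2r ?exprn_ge0 ?(ltW mu_gt0) // alpha_mono.
  by rewrite mulrC ler_wpM2r ?exprn_ge0 ?(ltW mu_gt0) // alpha_mono.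
have damped : mu ^+ (t.+1 - h) <= powR mu (t%:R / 2).
  rewrite -powR_mulrn ?(ltW mu_gt0) //.
  apply: ger_powR; first by rewrite mu_gt0 (ltW mu_lt1).
  by rewrite ler_pdivrMr // -natrM ler_nat; move: h2_le; rewrite -muln2; lia.
have omu_gt0 : 0 < 1 - mu by rewrite subr_gt0.
rewrite ler_pdivlMr //; apply: le_trans (ler_wpM2r (ltW omu_gt0) split_sum) _.
have -> : (alpha 0%N * early + alpha h * late) * (1 - mu)
    = alpha 0%N * ((1 - mu) * early)
      + alpha h * ((1 - mu) * (early + late) - (1 - mu) * early) by ring.
rewrite all_eq early_eq; apply: lerD.
  rewrite ler_wpM2l ?(ltW (alpha_gt0 _)) //; apply: le_trans damped.
  by rewrite lerBlDr lerDl exprn_ge0 ?(ltW mu_gt0).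
rewrite -[X in _ <= X]mulr1 ler_wpM2l ?(ltW (alpha_gt0 _)) //.
have : mu ^+ t.+1 <= mu ^+ (t.+1 - h).
  by rewrite ler_wiXn2l ?(ltW mu_gt0) ?(ltW mu_lt1) ?leq_subr.
by have := exprn_ge0 (t.+1 - h) (ltW mu_gt0); lra.
Qed.

Local Open Scope classical_set_scope.

Theorem lemma8 (R : realType) (n d L : nat)
  (E : nat -> rel 'I_n) (w : nat -> 'I_n -> 'I_n -> R) (beta : R)
  (f : 'I_n -> 'rV[R]_d -> R) (alpha : nat -> R)
  (x : nat -> 'I_n -> 'rV[R]_d) (y : nat -> 'I_n -> R)
  (g : nat -> 'I_n -> 'rV[R]_d) (G eta mu : R) :
  (* graphs: self-arcs, uniform strong connectivity *)
  (forall t i, E t i i) ->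
  uniformly_strongly_connected E L ->
  (* weights *)
  0 < beta ->
  (forall t i j, E t j i -> beta <= w t i j) ->
  (forall t i j, ~~ E t j i -> w t i j = 0) ->
  (forall t i, \sum_(k | E t i k) w t k i = 1) ->
  (* convex objectives, positive stepsizes *)
  (forall i, convex_fun (f i)) ->
  (forall t, 0 < alpha t) ->
  (* subgradient-push *)
  (forall t i, x t.+1 i = \sum_(j | E t j i) w t i j *: (x t j - alpha t *: g t j)) ->
  (forall i, y 0 i = 1) ->
  (forall t i, y t.+1 i = \sum_(j | E t j i) w t i j * y t j) ->
  (forall t i, is_subgradient (f i) ((y t i)^-1 *: x t i) (g t i)) ->
  (* bounded subgradients *)
  0 < G -> (forall t i, enorm (g t i) <= G) ->
  (* the constant eta *)
  0 < eta -> (forall t i, eta <= y t i) ->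
  (* the constant mu *)
  0 < mu -> mu < 1 ->
  (exists phi : nat -> 'I_n -> R,
      (forall t, stochastic_vec (phi t)) /\
      (forall t s i j, (s <= t)%N ->
          `|PhiW w t.+1 s i j - phi t i| <= 4 * mu ^+ (t - s))) ->
  (forall t i,
     enorm ((y t.+1 i)^-1 *: x t.+1 i
            - n%:R^-1 *: \sum_(k < n) (x t k - alpha t *: g t k))
     <= 8 / eta * mu ^+ t * \sum_(k < n) enorm (x 0%N k - alpha 0%N *: g 0%N k)
        + 8 * n%:R * G / eta * \sum_(1 <= s < t.+1) mu ^+ (t - s) * alpha s)
  /\
  ((forall t, alpha t.+1 <= alpha t) ->
   [series alpha k]_k @ \oo --> +oo ->
   cvgn [series alpha k ^+ 2]_k ->
   forall t i,
     enorm ((y t.+1 i)^-1 *: x t.+1 i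
            - n%:R^-1 *: \sum_(k < n) (x t k - alpha t *: g t k))
     <= 8 / eta * mu ^+ t * \sum_(k < n) enorm (x 0%N k - alpha 0%N *: g 0%N k)
        + 8 * n%:R * G / (eta * (1 - mu))
          * (alpha 0%N * powR mu (t%:R / 2) + alpha (uphalf t))).
Proof.
move=> _ _ _ _ w_off_arcs w_colsum _ alpha_gt0 x_rec y_init y_rec _ G_gt0 g_bound
  eta_gt0 y_ge_eta mu_gt0 mu_lt1 [phi [_ phi_approx]].
have error_bound := push_consensus_error w_off_arcs w_colsum x_rec y_init y_rec
  alpha_gt0 g_bound eta_gt0 y_ge_eta (ltW mu_gt0) (ltW mu_lt1) phi_approx.
split=> [//|alpha_noninc _ _ t i].
apply: le_trans (error_bound t i) _; rewrite lerD2l.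
set A := alpha 0%N * powR mu (t%:R / 2) + alpha (uphalf t).
have -> : 8 * n%:R * G / (eta * (1 - mu)) * A = 8 * n%:R * G / eta * (A / (1 - mu)).
  by rewrite invfM; ring.
rewrite ler_wpM2l ?discounted_tail_bound //.
by rewrite !mulr_ge0 ?invr_ge0 ?ler0n ?ltW.
Qed.
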